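(* Let $n\ge3$ and let $x\in B$ with $|x|=2n+9$ and $\delta(x)\ge5$. Then $[x]_2\notin R$.
   Context: Stern's sequence $(a(n))_{n\ge0}$: $a(0)=0$, $a(1)=1$, $a(2n)=a(n)$, $a(2n+1)=a(n)+a(n+1)$; $s(n)=a(n+1)$. $R$ is the set of record-setters of $s$, i.e. indices $v\ge0$ with $s(i)<s(v)$ for all $i<v$. For a binary string $x$, $[x]_2$ is the integer it represents in base 2 and $|x|$ its length. $B$ denotes the set of nonempty binary strings that are concatenations of blocks each equal to $10$ or $100$; for $x\in B$, $\delta(x)$ is the number of $0$s minus the number of $1$s in $x$, which equals the number of $100$ blocks. *)

From mathcomp Require Import all_boot.
Set Implicit Arguments. Unset Strict Implicit. Unset Printing Implicit Defensive.

(* Stern's diatomic sequence a(n): a(0)=0, a(1)=1, a(2n)=a(n), a(2n+1)=a(n)+a(n+1).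
   Defined with a fuel argument; [stern n] uses fuel n.+1, which suffices since
   all recursive calls are on strictly smaller arguments (for n >= 2). *)
Fixpoint stern_fuel (fuel n : nat) : nat :=
  match fuel with
  | 0 => 0
  | fuel'.+1 =>
    match n with
    | 0 => 0
    | 1 => 1
    | _ => if odd n then stern_fuel fuel' n./2 + stern_fuel fuel' n./2.+1
           else stern_fuel fuel' n./2
    end
  end.

Definition stern (n : nat) : nat := stern_fuel n.+1 n.

Definition s (n : nat) : nat := stern n.+1.

Definition record_setter (v : nat) : Prop := forall i, i < v -> s i < s v.

(* binary strings: seq bool, most significant bit first; [x]_2 *)
Definition bin_val (x : seq bool) : nat := foldl (fun (acc : nat) (b : bool) => acc.*2 + nat_of_bool b) 0 x.

Inductive inB : seq bool -> Prop :=
  | inB_10 : inB [:: true; false]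
  | inB_100 : inB [:: true; false; false]
  | inB_10c y : inB y -> inB ([:: true; false] ++ y)
  | inB_100c y : inB y -> inB ([:: true; false; false] ++ y).

(* delta(x) = #0s - #1s (as an integer-valued quantity; on B it is >= 0) *)
Definition delta (x : seq bool) : nat := count (fun b : bool => ~~ b) x - count (fun b : bool => b) x.

Example stern_small : [seq stern i | i <- iota 0 10] = [:: 0;1;1;2;1;3;2;3;1;4]. Proof. by []. Qed.
Example binval_ex : bin_val [:: true; false; false; true; false] = 18. Proof. by []. Qed.

(* Reading the bits of [x] from the left, the pair (a([x]), a([x]+1)) evolves by
   (p, q) |-> (p + q, q) on a 1 and (p, q) |-> (p, p + q) on a 0; a block 10 maps
   (p, q) to (p + q, p + 2q) and a block 100 to (p + q, 2p + 3q), preserving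
   3p <= 2q.  With R bits left, F_R p + F_(R+1) q bounds the final value of q; it
   is preserved by a block 10 and shrinks by a factor 9/10 at every block 100 but
   the last.  Five blocks 100 thus give s([x]) <= (9/10)^4 F_(2n+10), which is less
   than s = F_(2n+5) + 4 F_(2n+6) at the smaller index [1000 (10)^(n+1) 100]. *)

From mathcomp Require Import all_boot zify.

Lemma ratio_exp_weaken a b i j u v : 0 < a -> b <= a -> i <= j ->
  a ^ j * u <= b ^ j * v -> a ^ i * u <= b ^ i * v.
Proof.
move=> a_gt0 b_le_a /subnK <-; set e := j - i.
have ae_gt0 : 0 < a ^ e by rewrite expn_gt0 a_gt0.
have be_le : b ^ e <= a ^ e by case: (posnP e) => [-> | /leq_exp2r ->].
rewrite !expnD => le_j.
rewrite -(leq_pmul2l ae_gt0) !mulnA (leq_trans le_j) //.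
by rewrite !leq_mul2r be_le !orbT.
Qed.

Lemma stern_fuel_eq f g n : n < f -> n < g -> stern_fuel f n = stern_fuel g n.
Proof.
elim: f g n => [|f IH] [|g] n //.
case: n => [|[|n]] // lt_nf lt_ng /=; rewrite negbK.
case: ifP => odd_n.
  have n_mod2 : n %% 2 = 1 by rewrite modn2 odd_n.
  by rewrite (IH g) ?(IH g n./2.+2) //; rewrite -divn2; lia.
by rewrite (IH g) //; rewrite -divn2; lia.
Qed.

Lemma stern_fuelE f n : n < f -> stern_fuel f n = stern n.
Proof. by move=> lt_nf; apply: stern_fuel_eq. Qed.

Lemma stern_fuel_SS f n : stern_fuel f.+1 n.+2 =
  if odd n then stern_fuel f n./2.+1 + stern_fuel f n./2.+2 else stern_fuel f n./2.+1.
Proof. by rewrite /= negbK. Qed.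

Lemma stern_SS n :
  stern n.+2 = if odd n then stern n./2.+1 + stern n./2.+2 else stern n./2.+1.
Proof.
rewrite {1}/stern stern_fuel_SS.
case: ifP => odd_n; rewrite !stern_fuelE // -divn2; last lia.
all: by move: (modn2 n); rewrite odd_n; lia.
Qed.

Lemma stern_double m : stern m.*2 = stern m.
Proof. by case: m => [|m] //; rewrite doubleS stern_SS odd_double doubleK. Qed.

Lemma stern_odd m : stern m.*2.+1 = stern m + stern m.+1.
Proof.
case: m => [|m] //.
by rewrite doubleS stern_SS /= odd_double /= uphalf_double.
Qed.

Lemma bin_val_cat l1 l2 : bin_val (l1 ++ l2) = bin_val l1 * 2 ^ size l2 + bin_val l2.
Proof.
have foldl_acc acc l : foldl (fun (acc : nat) (b : bool) => acc.*2 + b) acc l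
    = acc * 2 ^ size l + bin_val l.
  elim: l acc => [|b l IH] acc /=; first by rewrite muln1 addn0.
  by rewrite /bin_val /= !IH expnS -!addnn; lia.
by rewrite {1}/bin_val foldl_cat foldl_acc.
Qed.

Lemma bin_val_rcons l b : bin_val (rcons l b) = (bin_val l).*2 + b.
Proof. by rewrite -cats1 bin_val_cat muln2; case: b. Qed.

Lemma bin_val_lt l : bin_val l < 2 ^ size l.
Proof.
elim/last_ind: l => [|l b IH] //.
by rewrite bin_val_rcons size_rcons expnS; case: b => /=; lia.
Qed.

Definition stern_step (v : nat * nat) (b : bool) : nat * nat :=
  if b then (v.1 + v.2, v.2) else (v.1, v.1 + v.2).

Lemma foldl_stern_step x :
  foldl stern_step (0, 1) x = (stern (bin_val x), stern (bin_val x).+1).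
Proof.
elim/last_ind: x => [|x b IH] //.
rewrite foldl_rcons IH bin_val_rcons /stern_step.
case: b => /=; rewrite ?addn1 ?addn0 stern_odd.
  by rewrite -doubleS stern_double.
by rewrite stern_double.
Qed.

Lemma s_bin_val x : s (bin_val x) = (foldl stern_step (0, 1) x).2.
Proof. by rewrite foldl_stern_step. Qed.

Definition block (b : bool) : seq bool :=
  if b then [:: true; false; false] else [:: true; false].

Definition blocks (bs : seq bool) : seq bool := flatten (map block bs).

Lemma blocks_cons b bs : blocks (b :: bs) = block b ++ blocks bs.
Proof. by []. Qed.

Lemma inB_blocks x : inB x -> exists b bs, x = blocks (b :: bs).
Proof.
elim => [|| y _ [b [bs ->]] | y _ [b [bs ->]]].
- by exists false, [::].
- by exists true, [::].
- by exists false, (b :: bs).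
- by exists true, (b :: bs).
Qed.

Lemma size_blocks bs : size (blocks bs) = 2 * size bs + count id bs.
Proof.
by elim: bs => [|b bs IH] //; rewrite blocks_cons size_cat IH; case: b => /=; lia.
Qed.

Lemma delta_blocks bs : delta (blocks bs) = count id bs.
Proof.
rewrite /delta.
have -> : count (fun b : bool => ~~ b) (blocks bs) = size bs + count id bs.
  by elim: bs => [|b bs IH] //; rewrite blocks_cons count_cat IH; case: b => /=; lia.
have -> : count (fun b : bool => b) (blocks bs) = size bs.
  by elim: bs => [|b bs IH] //; rewrite blocks_cons count_cat IH; case: b => /=; lia.
lia.
Qed.

Lemma foldl_stern_step_block p q b : foldl stern_step (p, q) (block b) =
  if b then (p + q, 2 * p + 3 * q) else (p + q, p + 2 * q).
Proof. by case: b; rewrite /= /stern_step /=; congr (_, _); lia. Qed.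

Fixpoint fib (n : nat) : nat :=
  match n with 0 => 0 | 1 => 1 | (m.+1 as k).+1 => fib m + fib k end.

Lemma fibSS n : fib n.+2 = fib n + fib n.+1.
Proof. by []. Qed.

Arguments fib : simpl never.

Lemma leq_fibS n : fib n <= fib n.+1.
Proof. by case: n => [|n] //; rewrite fibSS leq_addl. Qed.

Lemma fib_ratio_le k : 3 <= k -> 13 * fib k.+1 <= 22 * fib k.
Proof.
case: k => [|[|[|k]]] // _.
by have := leq_fibS k; rewrite !fibSS; lia.
Qed.

(* For even [R], the second coordinate reached from [v] through [R/2] blocks [10];
   when [3 v.1 <= 2 v.2] it bounds the one reached through any block word of
   length [R]. *)
Definition fib_form (R : nat) (v : nat * nat) : nat := fib R * v.1 + fib R.+1 * v.2.

Lemma fib_form_block_false R p q :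
  fib_form R.+2 (p, q) = fib_form R (foldl stern_step (p, q) (block false)).
Proof. by rewrite foldl_stern_step_block /fib_form /= !fibSS; nia. Qed.

Lemma fib_form_block_true R p q :
  fib_form R.+3 (p, q) = fib_form R (foldl stern_step (p, q) (block true)) + fib R * q.
Proof. by rewrite foldl_stern_step_block /fib_form /= !fibSS; nia. Qed.

(* [3 fib_form R (p + q, 2p + 3q) <= (5 F_R + 13 F_(R+1)) q <= 27 F_R q], so the
   loss [F_R q] of [fib_form_block_true] is at least a tenth of [fib_form R.+3 (p, q)]. *)
Lemma fib_form_block_true_decay R p q : 3 <= R -> 3 * p <= 2 * q ->
  10 * fib_form R (foldl stern_step (p, q) (block true)) <= 9 * fib_form R.+3 (p, q).
Proof.
move=> R_ge3 pq_le.
rewrite fib_form_block_true foldl_stern_step_block /fib_form /=.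
have Fratio := fib_ratio_le _ R_ge3.
have Fpq_le : fib R.+1 * (3 * p) <= fib R.+1 * (2 * q) by rewrite leq_mul2l pq_le orbT.
nia.
Qed.

Lemma blocks_decay bs p q : 3 * p <= 2 * q ->
  10 ^ (count id bs).-1 * (foldl stern_step (p, q) (blocks bs)).2
  <= 9 ^ (count id bs).-1 * fib_form (size (blocks bs)) (p, q).
Proof.
elim: bs p q => [|b bs IH] p q pq_le; first by rewrite /fib_form /= !mul1n.
rewrite blocks_cons foldl_cat size_cat.
case: b; rewrite [count _ _]/= [size (block _)]/=; last first.
  rewrite add0n fib_form_block_false foldl_stern_step_block.
  by apply: IH; lia.
rewrite add1n -[3 + _]/(size (blocks bs)).+3; set R := size (blocks bs).
set v := foldl stern_step (p, q) (block true).
have v_inv : 3 * v.1 <= 2 * v.2 by rewrite /v foldl_stern_step_block /=; lia.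
have := IH _ _ v_inv; rewrite -surjective_pairing -/R.
have [-> | count_gt0] := posnP (count id bs).
  by rewrite !mul1n fib_form_block_true => /leq_trans; apply; apply: leq_addr.
have R_ge3 : 3 <= R by rewrite /R size_blocks; move: (count_size id bs); lia.
rewrite -(prednK count_gt0) /= !expnS => Q_le.
rewrite -mulnA (leq_trans (leq_mul (leqnn 10) Q_le)) //.
rewrite mulnCA [9 * _]mulnC -mulnA leq_mul2l.
by rewrite fib_form_block_true_decay ?orbT.
Qed.

Lemma fib_form_blocks_false k R v :
  fib_form R (foldl stern_step v (blocks (nseq k false))) = fib_form (R + k.*2) v.
Proof.
elim: k R v => [|k IH] R [p q]; first by rewrite addn0.
by rewrite /= IH doubleS !addnS -fib_form_block_false.
Qed.

Lemma size_blocks_false k : size (blocks (nseq k false)) = k.*2.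
Proof. by rewrite size_blocks size_nseq count_nseq mul0n addn0 mul2n. Qed.

(* [1000 (10)^k 100]: the same length as [x] when [k = n + 1], but a smaller
   index, as [x] starts with [1001] or [1010]. *)
Definition rival (k : nat) : seq bool :=
  [:: true; false; false; false] ++ blocks (nseq k false) ++ block true.

Lemma s_rival k : s (bin_val (rival k)) = fib (k.*2 + 3) + 4 * fib (k.*2 + 4).
Proof.
rewrite s_bin_val /rival !foldl_cat.
have -> : foldl stern_step (0, 1) [:: true; false; false; false] = (1, 4) by [].
set v := foldl _ _ (blocks _).
have -> : (foldl stern_step v (block true)).2 = fib_form 3 v.
  by case: v => p q; rewrite foldl_stern_step_block /fib_form.
by rewrite fib_form_blocks_false /fib_form /= muln1 mulnC (addnC 3) -addnS.
Qed.

Lemma bin_val_rival_lt k : bin_val (rival k) < 9 * 2 ^ (k.*2 + 3).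
Proof.
rewrite /rival bin_val_cat.
have := bin_val_lt (blocks (nseq k false) ++ block true).
by rewrite size_cat size_blocks_false /= -[bin_val [:: _; _; _; _]]/8; lia.
Qed.

Lemma bin_val_blocks_ge b b' bs :
  9 * 2 ^ (size (blocks [:: b, b' & bs]) - 4) <= bin_val (blocks [:: b, b' & bs]).
Proof.
rewrite !blocks_cons catA bin_val_cat size_cat.
apply: leq_trans (leq_addr _ _).
rewrite -addnBAC; last by case: b; case: b'.
by rewrite expnD mulnA leq_mul2r; apply/orP; right; case: b; case: b'.
Qed.

Lemma fib_rival_gap m : 9 ^ 4 * fib (m + 7) <= 10 ^ 4 * (fib (m + 2) + 4 * fib (m + 3)).
Proof. by have := leq_fibS m; rewrite !addnS addn0 !fibSS; lia. Qed.

Theorem mainTheorem14 (n : nat) (x : seq bool) :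
  3 <= n -> inB x -> size x = 2 * n + 9 -> 5 <= delta x ->
  ~ record_setter (bin_val x).
Proof.
(* [3 <= n] is implied: five blocks [100] already have length 15. *)
move=> _ /inB_blocks [b [[|b' bs] def_x]] size_x delta_x record_x.
  by move: size_x; rewrite def_x size_blocks; case: (b) => /=; lia.
have rival_lt : bin_val (rival n.+1) < bin_val x.
  apply: leq_trans (bin_val_rival_lt _) _.
  have -> : n.+1.*2 + 3 = 2 * n + 9 - 4 by rewrite -addnn; lia.
  by rewrite -size_x def_x bin_val_blocks_ge.
have count_ge4 : 4 <= (count id [:: b, b' & bs]).-1.
  by move: delta_x; rewrite def_x delta_blocks; lia.
have := blocks_decay [:: b, b' & bs] 0 1 isT.
move=> /(ratio_exp_weaken 10 9 4 _ _ _ isT isT count_ge4).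
rewrite -def_x size_x /fib_form /= muln0 muln1 => decay_x.
have := record_x _ rival_lt; rewrite s_rival s_bin_val.
have := fib_rival_gap (2 * n + 3).
have -> : n.+1.*2 + 3 = 2 * n + 3 + 2 by rewrite -addnn; lia.
have -> : n.+1.*2 + 4 = 2 * n + 3 + 3 by rewrite -addnn; lia.
have -> : 2 * n + 3 + 7 = (2 * n + 9).+1 by lia.
lia.
Qed.
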